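(* If $\lambda$ is a strict partition ($\lambda_1>\lambda_2>\cdots>\lambda_n\ge0$), then the number of gapless $\lambda$-keys is the Catalan number $C_n=\frac{1}{n+1}\binom{2n}{n}$.
   Context: Fix $n\ge1$, $[m]=\{1,\dots,m\}$. A partition is $\lambda=(\lambda_1\ge\cdots\ge\lambda_n\ge0)\in\mathbb{Z}^n$; its boxes are $(j,i)$ (column $j$, row $i$) with $1\le j\le\lambda_1$, $1\le i\le\zeta_j:=\#\{i:\lambda_i\ge j\}$. A tableau of shape $\lambda$ fills the boxes with values in $[n]$, strictly increasing down columns and weakly increasing along rows. A $\lambda$-key is a tableau $Y$ of shape $\lambda$ such that the set of entries of column $l$ contains the set of entries of column $j$ whenever $l\le j$. Let $q_1<\dots<q_r$ be the distinct column lengths of $\lambda$ less than $n$. A $\lambda$-key $Y$ is gapless if for every $h\in[r-1]$: letting $b$ be the smallest value in the columns of length $q_{h+1}$ that does not appear in the columns of length $q_h$, and $m$ the largest value in the columns of length $q_h$, if $b\le m$ then every column of length $q_{h+1}$ contains all of $b,b+1,\dots,m$. *)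

From mathcomp Require Import all_boot.
Set Implicit Arguments. Unset Strict Implicit. Unset Printing Implicit Defensive.

(* A partition lambda = (lambda_1 >= ... >= lambda_n >= 0) is a seq nat of size n;
   lambda_i = nth 0 lam (i-1).  Columns j and rows i are 1-indexed. *)

Definition ncols (lam : seq nat) : nat := nth 0 lam 0.

Definition zeta (lam : seq nat) (j : nat) : nat := count (fun x => j <= x) lam.

Definition isbox (lam : seq nat) (j i : nat) : bool :=
  [&& 1 <= j, j <= ncols lam, 1 <= i & i <= zeta lam j].

(* A filling: position (j,i) (column j, row i, 1 <= j <= lambda_1, 1 <= i <= n)
   is stored at index (j-1, i-1); the value 0 means "no box", values 1..n are
   entries in [n]. *)
Definition filling (n : nat) (lam : seq nat) := {ffun 'I_(ncols lam) * 'I_n -> 'I_n.+1}.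

Definition ent n (lam : seq nat) (T : filling n lam) (j i : nat) : nat :=
  if (0 < j) && (0 < i) then
    match insub j.-1 : option 'I_(ncols lam), insub i.-1 : option 'I_n with
    | Some a, Some b => nat_of_ord (T (a, b))
    | _, _ => 0
    end
  else 0.

Definition is_tableau n (lam : seq nat) (T : filling n lam) : bool :=
  [&& [forall p : 'I_(ncols lam) * 'I_n,
         (nat_of_ord (T p) != 0) == isbox lam (p.1).+1 (p.2).+1],
      [forall j : 'I_(ncols lam).+1, forall i : 'I_n.+1,
         isbox lam j i.+1 ==> (ent T j i < ent T j i.+1) || (i == 0 :> nat)] &
      [forall j : 'I_(ncols lam).+1, forall i : 'I_n.+1,
         isbox lam j.+1 i ==> (ent T j i <= ent T j.+1 i) || (j == 0 :> nat)]].

Definition colset n (lam : seq nat) (T : filling n lam) (j : nat) : seq nat :=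
  [seq ent T j i | i <- iota 1 (zeta lam j)].

Definition is_key n (lam : seq nat) (T : filling n lam) : bool :=
  is_tableau T &&
  [forall l : 'I_(ncols lam).+1, forall j : 'I_(ncols lam).+1,
     [&& 1 <= l, l <= j & j <= ncols lam] ==>
       all (fun x => x \in colset T l) (colset T j)].

Definition qlist n (lam : seq nat) : seq nat :=
  sort leq (undup [seq zeta lam j | j <- iota 1 (ncols lam) & zeta lam j < n]).

Definition cols_of_len (lam : seq nat) (q : nat) : seq nat :=
  [seq j <- iota 1 (ncols lam) | zeta lam j == q].

Definition vals_len n (lam : seq nat) (T : filling n lam) (q : nat) : seq nat :=
  flatten [seq colset T j | j <- cols_of_len lam q].

Definition gapless_at n (lam : seq nat) (T : filling n lam) (h : nat) : bool :=
  let qh := nth 0 (qlist n lam) h.-1 in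
  let qh1 := nth 0 (qlist n lam) h in
  let b := head 0 (sort leq [seq x <- vals_len T qh1 | x \notin vals_len T qh]) in
  let m := foldr maxn 0 (vals_len T qh) in
  (b <= m) ==>
    all (fun j => all (fun x => x \in colset T j) (iota b (m.+1 - b)))
        (cols_of_len lam qh1).

Definition gapless n (lam : seq nat) (T : filling n lam) : bool :=
  all (gapless_at T) (iota 1 (size (qlist n lam)).-1).

Definition catalan (n : nat) : nat := 'C(n.*2, n) %/ n.+1.

From mathcomp Require Import all_boot zify.
Set Implicit Arguments. Unset Strict Implicit. Unset Printing Implicit Defensive.

(* For a strict partition with [n] parts every length [0 < k < n] occurs as a
   column length, and the columns of a key are nested, so a key is determined
   by the chain S_1 < S_2 < ... < S_(n-1) of its column entry sets inside
   [1..n], i.e. by the permutation [w] of [1..n] listing the element added at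
   each step; conversely every permutation yields a key.  The gapless condition
   on the key becomes the condition [gapless_word] on [w].  Splitting a gapless
   permutation at its minimum [a] writes it as [p ++ a :: r], where [p] and [r]
   are gapless permutations of the [k] values just above [a] and of the values
   above those; so the numbers of gapless permutations satisfy Segner's
   recurrence, and are the Catalan numbers. *)

(** * Ballot and Catalan numbers *)

Definition ballot (n r : nat) : nat :=
  if n is n'.+1 then 'C(n.*2 + r, n) - 'C(n.*2 + r, n') else 1.

Lemma leq_binS N k : k.*2.+1 <= N -> 'C(N, k) <= 'C(N, k.+1).
Proof.
move=> lt_kN; rewrite -(@leq_pmul2l k.+1) // mul_bin_left.
by apply: leq_mul => //; lia.
Qed.

Lemma ballotS n r : ballot n.+1 r.+1 = ballot n.+1 r + ballot n r.+2.
Proof.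
case: n => [|m]; first by rewrite /ballot /= !bin1 !bin0; lia.
rewrite /ballot.
have -> : m.+2.*2 + r.+1 = (m.+2.*2 + r).+1 by lia.
have -> : m.+1.*2 + r.+2 = m.+2.*2 + r by lia.
have := @leq_binS (m.+2.*2 + r) m ltac:(lia).
have := @leq_binS (m.+2.*2 + r) m.+1 ltac:(lia).
by rewrite !binS; lia.
Qed.

Lemma ballot0S n : ballot n.+1 0 = ballot n 1.
Proof.
case: n => [|m]; first by rewrite /ballot /= bin1 bin0.
rewrite /ballot !addn0.
have -> : m.+1.*2 + 1 = m.*2.+3 by lia.
have sym : 'C(m.*2.+3, m.+2) = 'C(m.*2.+3, m.+1).
  by rewrite -bin_sub; [congr 'C(_, _) | ]; lia.
rewrite (_ : m.+2.*2 = m.*2.+3.+1) // !(binS m.*2.+3) sym.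
have := @leq_binS m.*2.+3 m ltac:(lia).
lia.
Qed.

Lemma ballot_catalan n : ballot n 0 = catalan n.
Proof.
rewrite /catalan; case: n => [|n]; first by rewrite bin0.
rewrite /ballot addn0.
have := mul_bin_left n.+1.*2 n; rewrite (_ : n.+1.*2 - n = n.+2); last by lia.
have := @leq_binS n.+1.*2 n ltac:(lia) => le_bin bin_rec.
have def_bin : 'C(n.+1.*2, n.+1) = ('C(n.+1.*2, n.+1) - 'C(n.+1.*2, n)) * n.+2 by nia.
by rewrite {2}def_bin mulnK.
Qed.

Definition convn (f g : nat -> nat) (n : nat) : nat :=
  \sum_(0 <= k < n.+1) f k * g (n - k).

Lemma eq_convn f f' g g' n :
  (forall k, k <= n -> f k = f' k) -> (forall k, k <= n -> g k = g' k) ->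
  convn f g n = convn f' g' n.
Proof.
move=> eq_f eq_g; apply: eq_big_nat => k /andP[_ lt_kn].
by rewrite eq_f ?eq_g // leq_subr.
Qed.

Lemma convnA f g h n : convn (convn f g) h n = convn f (convn g h) n.
Proof.
rewrite /convn.
transitivity (\sum_(0 <= k < n.+1) \sum_(0 <= j < n.+1 | true && (j < k.+1))
                 f j * g (k - j) * h (n - k)).
  apply: eq_big_nat => k /andP[_ lt_kn].
  by rewrite big_distrl -big_nat_widen.
rewrite (exchange_big_dep_nat predT) //=; apply: eq_big_nat => j /andP[_ lt_jn].
rewrite big_distrr /= -(@big_nat_widenl _ _ _ j 0 n.+1 predT) //.
rewrite -{1}(add0n j) big_addn subSn //.
apply: congr_big_nat => // k /andP[_ lt_k].
by rewrite mulnA addnK; congr (_ * _ * h _); lia.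
Qed.

(* The extra parameter [r] is what makes Segner's recurrence for the Catalan
   numbers ([r = 0]) provable by induction. *)
Lemma convn_ballot n r : convn (ballot^~ 0) (ballot^~ r) n = ballot n r.+1.
Proof.
elim: n {-2}n (leqnn n) r => [|N IH] n le_nN r.
  by move: le_nN; rewrite leqn0 => /eqP ->; rewrite /convn big_nat1 mul1n.
case: n le_nN => [|n] le_nN; first exact: IH.
have IHn m r' : m <= n -> convn (ballot^~ 0) (ballot^~ r') m = ballot m r'.+1.
  by move=> le_mn; apply: IH; lia.
rewrite /convn big_nat_recl // subn0 ballotS mul1n; congr (_ + _).
transitivity (convn (convn (ballot^~ 0) (ballot^~ 0)) (ballot^~ r) n).
  apply: eq_big_nat => k /andP[_ lt_kn].
  by rewrite subSS ballot0S -(IHn k 0) //; lia.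
by rewrite convnA -(IHn n r.+1) //; apply: eq_convn => // k /IHn.
Qed.

Lemma leq_foldr_maxn v s : 0 < v -> (v <= foldr maxn 0 s) = has (leq v) s.
Proof.
move=> v_gt0; elim: s => [|x s IHs] /=; first by rewrite leqNgt v_gt0.
by rewrite leq_max IHs.
Qed.

Lemma geq_foldr_maxn v s : (foldr maxn 0 s <= v) = all (leq^~ v) s.
Proof. by elim: s => [|x s IHs] //=; rewrite geq_max IHs. Qed.

Lemma eq_foldr_maxn (s t : seq nat) : s =i t -> foldr maxn 0 s = foldr maxn 0 t.
Proof.
move=> eq_st; apply/eqP; rewrite eqn_leq !geq_foldr_maxn.
have ub u : all (leq^~ (foldr maxn 0 u)) u by rewrite -geq_foldr_maxn.
apply/andP; split; apply/allP => x; first by rewrite eq_st => /(allP (ub _)).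
by rewrite -eq_st => /(allP (ub _)).
Qed.

Lemma take_addn_cat (T : Type) (p s : seq T) i : take (size p + i) (p ++ s) = p ++ take i s.
Proof. by elim: p => //= x p ->. Qed.

Lemma uniq_flatten_map (T U : eqType) (F : T -> seq U) s : uniq s ->
  {in s, forall x, uniq (F x)} ->
  {in s &, forall x y, has (mem (F x)) (F y) -> x = y} ->
  uniq (flatten (map F s)).
Proof.
elim: s => [|x s IHs] //= /andP[x_s uniq_s] uniq_F inj_F.
rewrite cat_uniq uniq_F ?mem_head // IHs //; last 2 first.
- by move=> y y_s; apply: uniq_F; rewrite inE y_s orbT.
- by move=> y z y_s z_s; apply: inj_F; rewrite inE ?y_s ?z_s orbT.
rewrite andbT; apply/hasP => -[z /flattenP[_ /mapP[y y_s ->] z_y] z_x].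
have /inj_F eq_xy : has (mem (F y)) (F x) by apply/hasP; exists z.
by move: x_s; rewrite -eq_xy ?mem_head ?inE ?y_s ?orbT.
Qed.

Lemma sort_ltn_sorted (s : seq nat) : uniq s -> sorted ltn (sort leq s).
Proof.
by move=> uniq_s; rewrite ltn_sorted_uniq_leq sort_uniq uniq_s sort_sorted //; exact: leq_total.
Qed.

Lemma leq_nth_sorted_subset (s t : seq nat) i : sorted ltn s -> sorted ltn t ->
  {subset s <= t} -> i < size s -> nth 0 t i <= nth 0 s i.
Proof.
elim: t s i => [|y t IHt] [|x s] i //=; first by move=> _ _ /(_ x (mem_head _ _)).
move=> path_xs path_yt sub_st lt_is.
have /allP lt_yt := order_path_min ltn_trans path_yt.
have /allP lt_xs := order_path_min ltn_trans path_xs.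
have le_yx : y <= x.
  by case/predU1P: (sub_st x (mem_head _ _)) => [-> // | /lt_yt /ltnW].
case: i lt_is => [//|i] lt_is /=.
apply: IHt (path_sorted path_xs) (path_sorted path_yt) _ lt_is => z z_s.
have /predU1P[eq_zy | //] : z \in y :: t by apply: sub_st; rewrite inE z_s orbT.
by move: (lt_xs z z_s); rewrite eq_zy ltnNge le_yx.
Qed.

Lemma head_mem1 (s : seq nat) x : s =i [:: x] -> head 0 s = x.
Proof.
case: s => [|y s] eq_s; first by have := eq_s x; rewrite inE eqxx.
by have := eq_s y; rewrite mem_head inE => /esym/eqP.
Qed.

Lemma filter_new_letter (w s t : seq nat) h : uniq w -> h < size w ->
  s =i take h.+1 w -> t =i take h w -> [seq y <- s | y \notin t] =i [:: nth 0 w h].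
Proof.
move=> uniq_w lt_h eq_s eq_t y; rewrite mem_filter eq_s eq_t (take_nth 0) // mem_rcons !inE.
have := take_uniq h.+1 uniq_w; rewrite (take_nth 0) // rcons_uniq => /andP[new_h _].
by case: eqP => [-> | _] /=; rewrite ?new_h ?andNb.
Qed.

Lemma all_eq_const (T : eqType) (P : pred T) s c : s != [::] ->
  {in s, forall x, P x = c} -> all P s = c.
Proof.
case: s => [//|x s] _ P_c /=; rewrite P_c ?mem_head //.
by case: c P_c => // P_c; apply/allP => y y_s; rewrite P_c // inE y_s orbT.
Qed.

Lemma chain_step (s t : seq nat) : uniq s -> uniq t -> size t = (size s).+1 ->
  {subset s <= t} -> t =i head 0 [seq x <- t | x \notin s] :: s.
Proof.
move=> uniq_s uniq_t size_t sub_st.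
have : has (fun y => y \notin s) t.
  apply/hasPn => old_t; have := uniq_leq_size uniq_t (fun y y_t => negbNE (old_t y y_t)).
  by rewrite size_t ltnn.
rewrite has_filter; case def_L: [seq x <- t | x \notin s] => [//|x L] _ /=.
have /[!mem_filter] /andP[x_new x_t] : x \in [seq x <- t | x \notin s] by rewrite def_L mem_head.
have sub_xs_t : {subset x :: s <= t} by move=> y /predU1P[-> | /sub_st].
have uniq_xs : uniq (x :: s) by rewrite /= x_new.
have [_ eq_t] := uniq_min_size uniq_xs sub_xs_t (eq_leq size_t).
by move=> y; rewrite eq_t.
Qed.

Section ChainWord.

Variables (S : nat -> seq nat) (N : nat).
Hypotheses (S0 : S 0 = [::]) (uniq_S : forall k, k <= N -> uniq (S k)).
Hypotheses (size_S : forall k, k <= N -> size (S k) = k).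
Hypothesis sub_S : forall k, k < N -> {subset S k <= S k.+1}.

Definition chain_word : seq nat :=
  [seq head 0 [seq x <- S k.+1 | x \notin S k] | k <- iota 0 N].

Lemma size_chain_word : size chain_word = N.
Proof. by rewrite size_map size_iota. Qed.

Lemma nth_chain_word k : k < N ->
  nth 0 chain_word k = head 0 [seq x <- S k.+1 | x \notin S k].
Proof. by move=> lt_kN; rewrite (nth_map 0) ?size_iota // nth_iota. Qed.

Lemma take_chain_word k : k <= N -> take k chain_word =i S k.
Proof.
elim: k => [|k IHk] lt_kN; first by rewrite take0 S0.
rewrite (take_nth 0) ?size_chain_word // nth_chain_word //.
have size_Sk : size (S k.+1) = (size (S k)).+1 by rewrite !size_S // ltnW.
move=> y; rewrite (chain_step (uniq_S (ltnW lt_kN)) (uniq_S lt_kN) size_Sk (sub_S lt_kN)).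
by rewrite mem_rcons !inE IHk // ltnW.
Qed.

End ChainWord.

(** * Gapless words *)

(* [gapless_at] read on the word listing the successive new column entries of a
   key; see [gapless_at_key_of_word]. *)
Definition gapless_step (w : seq nat) (k : nat) : bool :=
  (nth 0 w k <= foldr maxn 0 (take k w)) ==>
  all (fun y => y \in take k.+1 w)
      (iota (nth 0 w k) ((foldr maxn 0 (take k w)).+1 - nth 0 w k)).

Definition gapless_word (w : seq nat) : bool := all (gapless_step w) (iota 0 (size w)).

Lemma gapless_stepP w k : 0 < nth 0 w k ->
  reflect (forall y, nth 0 w k <= y -> has (leq y) (take k w) -> y \in take k.+1 w)
          (gapless_step w k).
Proof.
rewrite /gapless_step; set x := nth 0 w k; set M := foldr maxn 0 _ => x_gt0.
apply: (iffP idP) => [/implyP gap y le_xy has_y | gap].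
  have le_yM : y <= M by rewrite leq_foldr_maxn //; lia.
  by move/allP: (gap (leq_trans le_xy le_yM)); apply; rewrite mem_iota; lia.
apply/implyP => le_xM; apply/allP => y; rewrite mem_iota => /andP[le_xy lt_yM].
by apply: gap => //; rewrite -leq_foldr_maxn //; lia.
Qed.

Lemma gapless_step0 w : 0 < nth 0 w 0 -> gapless_step w 0.
Proof. by move=> w0_gt0; rewrite /gapless_step take0 /= leqNgt w0_gt0. Qed.

Lemma gapless_step_last n w : perm_eq w (iota 1 n.+1) -> gapless_step w n.
Proof.
move=> perm_w; have size_w : size w = n.+1 by rewrite (perm_size perm_w) size_iota.
have mem_w x : (x \in w) = (0 < x <= n.+1) by rewrite (perm_mem perm_w) mem_iota; lia.
have : nth 0 w n \in w by rewrite mem_nth ?size_w.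
have : foldr maxn 0 (take n w) <= n.+1.
  by rewrite geq_foldr_maxn; apply/allP => z /mem_take; rewrite mem_w => /andP[].
rewrite mem_w => le_M /andP[x_gt0 _].
rewrite /gapless_step [take n.+1 w]take_oversize ?size_w //.
apply/implyP => _; apply/allP => y; rewrite mem_iota mem_w.
by move: x_gt0 le_M; set x := nth 0 w n; set M := foldr maxn 0 _; lia.
Qed.

Lemma gapless_word_inner n w : perm_eq w (iota 1 n) ->
  gapless_word w = all (gapless_step w) (iota 1 n.-2).
Proof.
move=> perm_w; have size_w : size w = n by rewrite (perm_size perm_w) size_iota.
have w0_gt0 : 0 < n -> 0 < nth 0 w 0.
  move=> n_gt0; have : nth 0 w 0 \in w by rewrite mem_nth ?size_w.
  by rewrite (perm_mem perm_w) mem_iota => /andP[].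
rewrite /gapless_word size_w; case: n perm_w size_w w0_gt0 => [|[|m]] perm_w size_w w0_gt0 //.
  by rewrite /= gapless_step0 ?w0_gt0.
rewrite -addn1 (iotaD 0 m.+1 1) all_cat /= gapless_step0 ?w0_gt0 //.
by rewrite add0n addn1 (gapless_step_last perm_w) /= !andbT.
Qed.

Section GaplessCat.

Variables (a k l : nat) (p r : seq nat).
Hypotheses (a_gt0 : 0 < a) (perm_p : perm_eq p (iota a.+1 k)).
Hypothesis perm_r : perm_eq r (iota (a + k).+1 l).

Let size_p : size p = k. Proof. by rewrite (perm_size perm_p) size_iota. Qed.
Let size_r : size r = l. Proof. by rewrite (perm_size perm_r) size_iota. Qed.
Let mem_p z : (z \in p) = (a < z <= a + k).
Proof. by rewrite (perm_mem perm_p) mem_iota; lia. Qed.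
Let mem_r z : (z \in r) = (a + k < z <= a + k + l).
Proof. by rewrite (perm_mem perm_r) mem_iota; lia. Qed.

Lemma gapless_step_catl i : i < k -> gapless_step (p ++ a :: r) i = gapless_step p i.
Proof. by move=> lt_ik; rewrite /gapless_step nth_cat size_p lt_ik !takel_cat ?size_p //; lia. Qed.

Lemma gapless_step_cat_min : gapless_step (p ++ a :: r) k.
Proof.
have nth_a : nth 0 (p ++ a :: r) k = a by rewrite nth_cat size_p ltnn subnn.
apply/gapless_stepP; rewrite nth_a // => y le_ay.
rewrite (take_size_cat _ size_p) -addn1 -size_p take_addn_cat /=.
case/hasP=> z /[!mem_p] z_p le_yz.
by rewrite mem_cat inE mem_p; case: ltngtP le_ay => //=; lia.
Qed.

Lemma gapless_step_catr i : i < l ->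
  gapless_step (p ++ a :: r) (k.+1 + i) = gapless_step r i.
Proof.
move=> lt_il; set w := p ++ a :: r.
have nth_w : nth 0 w (k.+1 + i) = nth 0 r i.
  rewrite nth_cat size_p ifN; last by lia.
  by rewrite (_ : k.+1 + i - k = i.+1) //; lia.
have : nth 0 r i \in r by rewrite mem_nth ?size_r.
rewrite mem_r => /andP[lt_akx _].
have take_w j : take (k.+1 + j) w = p ++ a :: take j r.
  by rewrite -size_p addSnnS take_addn_cat.
have drop_pa y s : a + k < y ->
    (y \in p ++ a :: s) = (y \in s) /\ has (leq y) (p ++ a :: s) = has (leq y) s.
  move=> lt_ay; rewrite mem_cat has_cat inE /= mem_p.
  have -> : has (leq y) p = false by apply/hasP => -[z /[!mem_p]]; lia.
  by split; case: ltngtP lt_ay => //=; lia.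
apply/(gapless_stepP (_ : 0 < _))/(gapless_stepP (_ : 0 < _)); rewrite ?nth_w; try lia.
all: rewrite -addnS !take_w => gap y le_xy.
all: have lt_ay := leq_trans lt_akx le_xy.
all: have [mem_y _] := drop_pa y (take i.+1 r) lt_ay.
all: have [_ has_y] := drop_pa y (take i r) lt_ay.
  by rewrite -mem_y -has_y; apply: gap.
by rewrite mem_y has_y; apply: gap.
Qed.

Lemma gapless_word_cat : gapless_word (p ++ a :: r) = gapless_word p && gapless_word r.
Proof.
rewrite /gapless_word size_cat /= size_p size_r iotaD add0n /= -[k.+1]addn0 iotaDl.
rewrite all_cat /= gapless_step_cat_min all_map.
congr (_ && _); apply: eq_in_all => i; rewrite mem_iota /= => lt_i.
  exact: gapless_step_catl.
exact: gapless_step_catr.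
Qed.

End GaplessCat.

Lemma perm_iota_cat_min a k m p r : k <= m -> perm_eq p (iota a.+1 k) ->
  perm_eq (p ++ a :: r) (iota a m.+1) = perm_eq r (iota (a + k).+1 (m - k)).
Proof.
move=> le_km perm_p.
have -> : iota a m.+1 = a :: iota a.+1 k ++ iota (a + k).+1 (m - k).
  by rewrite /= -addSn -iotaD subnKC.
by rewrite -cat1s perm_catCA /= perm_cons (perm_catr _ perm_p) perm_cat2l.
Qed.

Lemma perm_iota_prefix_min a p : uniq p -> {in p, forall z, a < z} ->
  (forall y, a <= y -> has (leq y) p -> y \in rcons p a) ->
  perm_eq p (iota a.+1 (size p)).
Proof.
move=> uniq_p gt_ap gap; set M := foldr maxn 0 p.
have /allP le_pM : all (leq^~ M) p by rewrite -geq_foldr_maxn.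
suff perm_p : perm_eq p (iota a.+1 (M - a)) by rewrite (perm_size perm_p) size_iota.
apply: uniq_perm; rewrite ?iota_uniq // => z; rewrite mem_iota.
apply/idP/idP => [z_p | lt_z]; first by have := gt_ap z z_p; have := le_pM z z_p; lia.
have : z \in rcons p a by apply: gap; [lia | rewrite -leq_foldr_maxn //; lia].
by rewrite mem_rcons inE; case: eqP => //; lia.
Qed.

(* The values preceding the minimum [a] of a gapless permutation form the
   interval just above [a]: apply the gapless condition at the position of [a]. *)
Lemma gapless_perm_split a m w : 0 < a -> perm_eq w (iota a m.+1) -> gapless_word w ->
  exists k p r, [/\ k <= m, w = p ++ a :: r, perm_eq p (iota a.+1 k)
                  & perm_eq r (iota (a + k).+1 (m - k))].
Proof.
move=> a_gt0 perm_w gap_w.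
have uniq_w : uniq w by rewrite (perm_uniq perm_w) iota_uniq.
have size_w : size w = m.+1 by rewrite (perm_size perm_w) size_iota.
have mem_w z : (z \in w) = (a <= z <= a + m) by rewrite (perm_mem perm_w) mem_iota; lia.
have a_w : a \in w by rewrite mem_w leqnn /=; lia.
set k := index a w; have lt_kw : k < size w by rewrite index_mem.
have le_km : k <= m by rewrite -ltnS -size_w.
have def_w : w = take k w ++ a :: drop k.+1 w.
  by rewrite -[in LHS](cat_take_drop k w) (drop_nth 0) ?nth_index.
set p := take k w in def_w *; set r := drop k.+1 w in def_w *.
have size_p : size p = k by rewrite size_takel // ltnW.
have take_k : take k w = p by rewrite def_w take_size_cat.
have take_k1 : take k.+1 w = rcons p a.
  by rewrite def_w -cat_rcons take_size_cat ?size_rcons ?size_p.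
clearbody p r.
have [uniq_p a_p] : uniq p /\ a \notin p.
  by move: uniq_w; rewrite def_w cat_uniq /= => /and3P[-> /norP[]].
have gt_ap z : z \in p -> a < z.
  move=> z_p; have : z \in w by rewrite def_w mem_cat z_p.
  have : z != a by apply: contraNneq a_p => <-.
  by rewrite mem_w; lia.
have : gapless_step w k by apply: (allP gap_w); rewrite mem_iota.
move/(gapless_stepP (_ : 0 < _)); rewrite nth_index // take_k take_k1 => /(_ a_gt0) gap.
have perm_p := perm_iota_prefix_min uniq_p gt_ap gap; rewrite size_p in perm_p.
exists k, p, r; split=> //.
by rewrite -(perm_iota_cat_min _ le_km perm_p) -def_w.
Qed.

(* Splitting at the minimum [a] (see [gapless_perm_split]); the fuel [f] only
   ensures termination and is harmless as soon as [m <= f]. *)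
Fixpoint gapless_perms (f a m : nat) : seq (seq nat) :=
  if f is f'.+1 then
    if m is m'.+1 then
      flatten [seq [seq p ++ a :: r | p <- gapless_perms f' a.+1 k,
                                      r <- gapless_perms f' (a + k).+1 (m' - k)]
              | k <- iota 0 m]
    else [:: [::]]
  else [:: [::]].

Lemma gapless_permsS f a m : gapless_perms f.+1 a m.+1 =
  flatten [seq [seq p ++ a :: r | p <- gapless_perms f a.+1 k,
                                  r <- gapless_perms f (a + k).+1 (m - k)]
          | k <- iota 0 m.+1].
Proof. by []. Qed.

Lemma mem_gapless_perms f a m w : m <= f -> 0 < a ->
  (w \in gapless_perms f a m) = perm_eq w (iota a m) && gapless_word w.
Proof.
elim: f a m w => [|f IHf] a m w le_mf a_gt0.
  by move: le_mf; rewrite leqn0 => /eqP ->; rewrite inE; apply/eqP/andP => [-> | [/perm_nilP]].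
case: m le_mf => [|m] le_mf.
  by rewrite inE; apply/eqP/andP => [-> | [/perm_nilP]].
rewrite gapless_permsS.
apply/flattenP/andP => [[_ /mapP[k] /[!mem_iota] /= lt_km ->] | [perm_w gap_w]].
  case/allpairsP=> -[p r] /= [+ + ->]; rewrite !IHf; try lia.
  move=> /andP[perm_p gap_p] /andP[perm_r gap_r].
  by rewrite (perm_iota_cat_min _ _ perm_p) // (gapless_word_cat a_gt0 perm_p perm_r) gap_p.
have [k [p [r [le_km def_w perm_p perm_r]]]] := gapless_perm_split a_gt0 perm_w gap_w.
move: gap_w; rewrite def_w (gapless_word_cat a_gt0 perm_p perm_r) => /andP[gap_p gap_r].
eexists; first by apply/mapP; exists k; rewrite ?mem_iota.
by apply/allpairsP; exists (p, r); rewrite !IHf ?perm_p ?perm_r ?gap_p ?gap_r //; lia.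
Qed.

Lemma size_gapless_perms f a m : m <= f -> size (gapless_perms f a m) = ballot m 0.
Proof.
elim: f a m => [|f IHf] a [|m] // le_mf.
rewrite gapless_permsS size_flatten /shape -map_comp sumnE big_map ballot0S -convn_ballot.
rewrite /convn /index_iota subn0; apply: eq_big_seq => k /[!mem_iota] lt_km /=.
by rewrite size_allpairs !IHf //; lia.
Qed.

Lemma uniq_gapless_perms f a m : m <= f -> 0 < a -> uniq (gapless_perms f a m).
Proof.
elim: f a m => [|f IHf] a [|m] // le_mf a_gt0.
have index_a k w : k <= m -> w \in [seq p ++ a :: r | p <- gapless_perms f a.+1 k,
                                                    r <- gapless_perms f (a + k).+1 (m - k)] ->
    index a w = k.
  move=> le_km /allpairsP[[p r] [/= + _ ->]]; rewrite mem_gapless_perms; try lia.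
  case/andP=> perm_p _; have a_p : a \notin p by rewrite (perm_mem perm_p) mem_iota ltnn.
  by rewrite index_cat (negbTE a_p) /= eqxx addn0 (perm_size perm_p) size_iota.
rewrite gapless_permsS; apply: uniq_flatten_map; first exact: iota_uniq.
  move=> k /[!mem_iota] /= lt_km; apply: allpairs_uniq; rewrite ?IHf //; try lia.
  move=> [p r] [p' r'] /allpairsP[[p1 r1] [/= + _ [-> ->]]] /allpairsP[[p2 r2] [/= + _ [-> ->]]].
  rewrite !mem_gapless_perms; try lia.
  move=> /andP[perm_p1 _] /andP[perm_p2 _] /= /eqP.
  rewrite eqseq_cat ?(perm_size perm_p1) ?(perm_size perm_p2) ?size_iota //.
  by case/andP=> /eqP -> /eqP [->].
move=> k k' /[!mem_iota] /= lt_km lt_k'm /hasP[w w_k' w_k].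
by rewrite -(index_a k w) ?(index_a k' w) //; lia.
Qed.

(** * Strict partitions and tableaux *)

Lemma zeta_leq_size lam j : zeta lam j <= size lam.
Proof. exact: count_size. Qed.

Lemma leq_zeta lam j j' : j <= j' -> zeta lam j' <= zeta lam j.
Proof. by move=> le_jj'; apply: sub_count => x /=; apply: leq_trans. Qed.

Lemma zeta_gt0 lam j : 0 < j -> j <= ncols lam -> 0 < zeta lam j.
Proof.
case: lam => [|x l] j_gt0; rewrite /ncols /=; first by rewrite leqNgt j_gt0.
by rewrite /zeta /= => ->.
Qed.

Lemma mem_cols_of_len lam q j :
  (j \in cols_of_len lam q) = [&& 0 < j, j <= ncols lam & zeta lam j == q].
Proof. by rewrite mem_filter mem_iota andbC add1n ltnS -andbA. Qed.

Section StrictPartition.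

Variable lam : seq nat.
Hypothesis lam_strict : sorted gtn lam.

Let gtn_trans : transitive gtn. Proof. by move=> y x z /= lt_yx lt_zy; apply: ltn_trans lt_yx. Qed.

Lemma ltn_nth_strict i j : i < j -> j < size lam -> nth 0 lam j < nth 0 lam i.
Proof.
move=> lt_ij lt_j; apply: (sorted_ltn_nth gtn_trans 0 lam_strict) => //.
by rewrite inE; lia.
Qed.

Lemma nth_strict_gt0 k : k.+1 < size lam -> 0 < nth 0 lam k.
Proof. by move=> lt_k; have := ltn_nth_strict (ltnSn k) lt_k; lia. Qed.

Lemma nth_leq_ncols k : k < size lam -> nth 0 lam k <= ncols lam.
Proof. by case: k => // k lt_k; rewrite ltnW // ltn_nth_strict. Qed.

Lemma zeta_nth k : k < size lam -> zeta lam (nth 0 lam k) = k.+1.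
Proof.
elim: lam lam_strict k => [|x l IHl] // path_xl k lt_k.
have /allP lt_lx : all (gtn x) l := order_path_min gtn_trans path_xl.
have zeta_cons j : zeta (x :: l) j = (j <= x) + zeta l j by [].
case: k lt_k => [|k] lt_k; rewrite zeta_cons /=.
  rewrite leqnn add1n; congr _.+1; apply/eqP; rewrite -leqn0 leqNgt -has_count.
  by apply/hasPn => y /lt_lx /=; rewrite -ltnNge.
by rewrite (IHl (path_sorted path_xl)) // ltnW //; apply/lt_lx/mem_nth.
Qed.

Lemma qlist_strict : qlist (size lam) lam = iota 1 (size lam).-1.
Proof.
apply: (irr_sorted_eq ltn_trans ltnn).
- exact/sort_ltn_sorted/undup_uniq.
- exact: iota_ltn_sorted.
move=> q; rewrite mem_sort mem_undup mem_iota; apply/mapP/idP.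
  case=> j /[!(mem_filter, mem_iota)] /andP[lt_j /andP[j_gt0 lt_jc]] ->.
  by have := @zeta_gt0 lam j j_gt0; lia.
move=> lt_q; exists (nth 0 lam q.-1); last by rewrite zeta_nth //; lia.
rewrite mem_filter zeta_nth ?mem_iota; try lia.
by have := nth_strict_gt0 (k := q.-1); have := nth_leq_ncols (k := q.-1); lia.
Qed.

Lemma nth_cols_of_len q : 0 < q < size lam -> nth 0 lam q.-1 \in cols_of_len lam q.
Proof.
move=> /andP[q_gt0 lt_q]; rewrite mem_filter zeta_nth ?prednK ?eqxx //=; last by lia.
by rewrite mem_iota nth_strict_gt0 ?prednK //= add1n ltnS nth_leq_ncols //; lia.
Qed.

End StrictPartition.

Lemma ent_ord n lam (T : filling n lam) (a : 'I_(ncols lam)) (b : 'I_n) :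
  ent T a.+1 b.+1 = T (a, b).
Proof.
rewrite /ent /=.
case: insubP => [a' _ /val_inj -> | ]; last by rewrite ltn_ord.
by case: insubP => [b' _ /val_inj -> | ]; last by rewrite ltn_ord.
Qed.

Lemma ent_out n lam (T : filling n lam) j i :
  ~~ [&& 0 < j, 0 < i, j <= ncols lam & i <= n] -> ent T j i = 0.
Proof.
rewrite /ent; case: ifP => // /andP[j_gt0 i_gt0] out_ji.
case: insubP => [a lt_j _|] //; case: insubP => [b lt_i _|] //.
by move: out_ji lt_j lt_i; rewrite j_gt0 i_gt0 /=; lia.
Qed.

Lemma ent_leq n lam (T : filling n lam) j i : ent T j i <= n.
Proof.
rewrite /ent; case: ifP => // _.
by case: insubP => [a _ _|//]; case: insubP => [b _ _|//]; rewrite -ltnS.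
Qed.

Lemma size_colset n lam (T : filling n lam) j : size (colset T j) = zeta lam j.
Proof. by rewrite size_map size_iota. Qed.

Lemma nth_colset n lam (T : filling n lam) j i :
  i < zeta lam j -> nth 0 (colset T j) i = ent T j i.+1.
Proof. by move=> lt_i; rewrite (nth_map 0) ?size_iota // nth_iota. Qed.

Section Tableau.

Variables (n : nat) (lam : seq nat) (T : filling n lam).
Hypotheses (size_lam : size lam = n) (T_tableau : is_tableau T).

Lemma tableau_out (p : 'I_(ncols lam) * 'I_n) : ~~ isbox lam p.1.+1 p.2.+1 -> T p = 0 :> nat.
Proof.
move: T_tableau => /and3P[/forallP /(_ p) + _ _] /negbTE out_p.
by rewrite out_p => /eqP/eqP; case: (T p) => -[].
Qed.

Lemma ent_box_gt0 j i : isbox lam j i -> 0 < ent T j i.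
Proof.
case/and4P=> j_gt0 le_jc i_gt0 le_iz.
have lt_j : j.-1 < ncols lam by lia.
have lt_i : i.-1 < n by have := zeta_leq_size lam j; lia.
rewrite -(prednK j_gt0) -(prednK i_gt0) -[j.-1]/(Ordinal lt_j : nat) -[i.-1]/(Ordinal lt_i : nat).
rewrite ent_ord; move: T_tableau => /and3P[/forallP /(_ (Ordinal lt_j, Ordinal lt_i)) + _ _].
by rewrite /= !prednK // /isbox j_gt0 le_jc i_gt0 le_iz lt0n => /eqP.
Qed.

Lemma colset_sorted j : 0 < j -> j <= ncols lam -> sorted ltn (colset T j).
Proof.
move=> j_gt0 le_jc; apply/(sortedP 0) => i; rewrite size_colset => lt_i.
rewrite !nth_colset; try lia.
move: T_tableau => /and3P[_ /forallP /(_ (inord j)) /forallP /(_ (inord i.+1)) + _].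
rewrite !inordK; try (by have := zeta_leq_size lam j; lia).
by rewrite /isbox j_gt0 le_jc lt_i orbF.
Qed.

Lemma colset_range j x : 0 < j -> j <= ncols lam -> x \in colset T j -> 0 < x <= n.
Proof.
move=> j_gt0 le_jc /mapP[i /[!mem_iota] lt_i ->].
by rewrite ent_leq ent_box_gt0 // /isbox j_gt0 le_jc; lia.
Qed.

End Tableau.

Lemma colset_key_subset n lam (T : filling n lam) l j :
  is_key T -> 0 < l -> l <= j -> j <= ncols lam -> {subset colset T j <= colset T l}.
Proof.
move=> /andP[_ /forallP /(_ (inord l)) /forallP /(_ (inord j))] + l_gt0 le_lj le_jc.
rewrite !inordK ?ltnS ?l_gt0 ?le_lj ?le_jc //=; last exact: leq_trans le_jc.
by move=> /allP.
Qed.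

(** * Keys and permutations *)

Definition key_of_word n lam (w : seq nat) : filling n lam :=
  [ffun p : 'I_(ncols lam) * 'I_n =>
     inord (if isbox lam p.1.+1 p.2.+1
            then nth 0 (sort leq (take (zeta lam p.1.+1) w)) p.2 else 0)].

Section KeyOfWord.

Variables (n : nat) (lam w : seq nat).
Hypotheses (size_lam : size lam = n) (perm_w : perm_eq w (iota 1 n)).

Let uniq_w : uniq w. Proof. by rewrite (perm_uniq perm_w) iota_uniq. Qed.
Let size_w : size w = n. Proof. by rewrite (perm_size perm_w) size_iota. Qed.
Let mem_w x : (x \in w) = (0 < x <= n). Proof. by rewrite (perm_mem perm_w) mem_iota; lia. Qed.

Let size_col j : size (sort leq (take (zeta lam j) w)) = zeta lam j.
Proof. by rewrite size_sort size_takel // size_w -size_lam zeta_leq_size. Qed.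

Let sorted_col j : sorted ltn (sort leq (take (zeta lam j) w)).
Proof. exact/sort_ltn_sorted/take_uniq. Qed.

Let nth_col_leq j i : nth 0 (sort leq (take (zeta lam j) w)) i <= n.
Proof.
have [lt_i | ?] := ltnP i (zeta lam j); last by rewrite nth_default ?size_col.
have : i < size (sort leq (take (zeta lam j) w)) by rewrite size_col.
by move/(mem_nth 0); rewrite mem_sort => /mem_take; rewrite mem_w => /andP[].
Qed.

Lemma ent_key_of_word j i : ent (key_of_word n lam w) j i =
  if isbox lam j i then nth 0 (sort leq (take (zeta lam j) w)) i.-1 else 0.
Proof.
have [/and4P[j_gt0 i_gt0 le_jc le_in] | out_ji] := boolP [&& 0 < j, 0 < i, j <= ncols lam & i <= n].
  have lt_j : j.-1 < ncols lam by lia.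
  have lt_i : i.-1 < n by lia.
  rewrite -(prednK j_gt0) -(prednK i_gt0) -[j.-1]/(Ordinal lt_j : nat) -[i.-1]/(Ordinal lt_i : nat).
  by rewrite ent_ord ffunE inordK //= ltnS; case: ifP => // _; apply: nth_col_leq.
rewrite ent_out //; case: ifP => // /and4P[j_gt0 le_jc i_gt0 le_iz].
by move: out_ji; have := zeta_leq_size lam j; rewrite j_gt0 i_gt0 le_jc /=; lia.
Qed.

Lemma colset_key_of_word j : 0 < j -> j <= ncols lam ->
  colset (key_of_word n lam w) j = sort leq (take (zeta lam j) w).
Proof.
move=> j_gt0 le_jc; apply: (@eq_from_nth _ 0); rewrite size_colset ?size_col // => i lt_i.
by rewrite nth_colset // ent_key_of_word /isbox j_gt0 le_jc lt_i.
Qed.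

Let sub_col j j' : j <= j' ->
  {subset sort leq (take (zeta lam j') w) <= sort leq (take (zeta lam j) w)}.
Proof.
move=> le_jj' x; rewrite !mem_sort -(take_takel w (leq_zeta lam le_jj')).
exact: mem_take.
Qed.

Lemma key_of_word_tableau : is_tableau (key_of_word n lam w).
Proof.
apply/and3P; split.
- apply/forallP => -[a b]; rewrite ffunE /= inordK ?ltnS; last first.
    by case: ifP => // _; apply: nth_col_leq.
  case: ifP => [/and4P[_ _ _ lt_b] | _]; last by rewrite eqxx.
  have : b < size (sort leq (take (zeta lam a.+1) w)) by rewrite size_col.
  by move/(mem_nth 0); rewrite mem_sort => /mem_take; rewrite mem_w lt0n => /andP[->].
- apply/forallP => j; apply/forallP => i; apply/implyP => box_ji1.
  have [-> | i_gt0] := posnP i; first by rewrite orbT.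
  have box_ji : isbox lam j i by move: box_ji1; rewrite /isbox i_gt0 => /and4P[-> -> _ /ltnW ->].
  rewrite !ent_key_of_word box_ji box_ji1 /=; case/and4P: box_ji1 => _ _ _ le_iz.
  apply/orP; left; apply: (sorted_ltn_nth ltn_trans 0 (sorted_col j));
    by rewrite ?inE ?size_col; lia.
- apply/forallP => j; apply/forallP => i; apply/implyP => box_j1i.
  have [-> | j_gt0] := posnP j; first by rewrite orbT.
  have [-> | i_gt0] := posnP i; first by rewrite !ent_out ?andbF.
  have box_ji : isbox lam j i.
    move: box_j1i; rewrite /isbox j_gt0 => /and4P[_ /ltnW -> -> le_iz] /=.
    exact: leq_trans le_iz (leq_zeta _ (leqnSn _)).
  rewrite !ent_key_of_word box_ji box_j1i; apply/orP; left.
  apply: leq_nth_sorted_subset; rewrite ?sorted_col ?size_col //; first exact: sub_col.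
  by case/and4P: box_j1i; lia.
Qed.

Lemma key_of_word_key : is_key (key_of_word n lam w).
Proof.
rewrite /is_key key_of_word_tableau; apply/forallP => l; apply/forallP => j.
apply/implyP => /and3P[l_gt0 le_lj le_jc]; apply/allP => x.
by rewrite !colset_key_of_word //; try lia; apply: sub_col.
Qed.

Hypothesis lam_strict : sorted gtn lam.

Lemma vals_len_key_of_word q : 0 < q < n -> vals_len (key_of_word n lam w) q =i take q w.
Proof.
move=> /andP[q_gt0 lt_qn] x; apply/flattenP/idP => [[_ /mapP[j] + ->] | x_w].
  rewrite mem_cols_of_len => /and3P[j_gt0 le_jc /eqP <-].
  by rewrite colset_key_of_word // mem_sort.
have := @nth_cols_of_len lam lam_strict q; rewrite size_lam q_gt0 lt_qn => /(_ isT) col_q.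
exists (colset (key_of_word n lam w) (nth 0 lam q.-1)); first exact: map_f.
move: col_q; rewrite mem_cols_of_len => /and3P[j_gt0 le_jc /eqP zeta_j].
by rewrite colset_key_of_word // zeta_j mem_sort.
Qed.

Lemma gapless_at_key_of_word h : 0 < h -> h.+1 < n ->
  gapless_at (key_of_word n lam w) h = gapless_step w h.
Proof.
move=> h_gt0 lt_hn.
rewrite /gapless_at -size_lam qlist_strict // size_lam !nth_iota; try lia.
rewrite add1n prednK //.
have vals_h : vals_len (key_of_word n lam w) h =i take h w.
  by apply: vals_len_key_of_word; rewrite h_gt0; lia.
have vals_h1 : vals_len (key_of_word n lam w) h.+1 =i take h.+1 w.
  by apply: vals_len_key_of_word; rewrite lt_hn.
set L := [seq x <- _ | _].
have new_L : L =i [:: nth 0 w h] by apply: filter_new_letter; rewrite ?size_w; try lia.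
rewrite (@head_mem1 _ (nth 0 w h)); last by move=> y; rewrite mem_sort new_L.
rewrite (eq_foldr_maxn vals_h) /gapless_step; congr (_ ==> _); apply: all_eq_const.
  have := @nth_cols_of_len lam lam_strict h.+1; rewrite size_lam lt_hn => /(_ isT).
  by case: (cols_of_len lam h.+1).
move=> j; rewrite mem_cols_of_len => /and3P[j_gt0 le_jc /eqP zeta_j].
by rewrite colset_key_of_word // zeta_j; apply: eq_all => y; rewrite mem_sort.
Qed.

Lemma gapless_key_of_word : gapless (key_of_word n lam w) = gapless_word w.
Proof.
rewrite /gapless (gapless_word_inner perm_w) -size_lam qlist_strict // size_lam size_iota.
apply: eq_in_all => h /[!mem_iota] /andP[h_gt0 lt_h].
by apply: gapless_at_key_of_word; lia.
Qed.

End KeyOfWord.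

Section WordOfKey.

Variables (n : nat) (lam : seq nat) (T : filling n lam).
Hypotheses (n_gt0 : 0 < n) (size_lam : size lam = n) (lam_strict : sorted gtn lam).
Hypothesis T_key : is_key T.

Let T_tableau : is_tableau T. Proof. by case/andP: T_key. Qed.

Let col_bounds k : 0 < k < n -> 0 < nth 0 lam k.-1 <= ncols lam.
Proof.
move=> /andP[k_gt0 lt_kn].
by rewrite nth_strict_gt0 ?nth_leq_ncols ?prednK ?size_lam //; lia.
Qed.

Let uniq_colset j : 0 < j -> j <= ncols lam -> uniq (colset T j).
Proof. by move=> j_gt0 le_jc; apply: (sorted_uniq ltn_trans ltnn); apply: colset_sorted. Qed.

(* For [0 < k < n] the columns of length [k] all have the same entries, which
   form the [k]-th set of a chain of subsets of [1..n]. *)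
Definition key_chain (k : nat) : seq nat :=
  if k == 0 then [::] else if k < n then colset T (nth 0 lam k.-1) else iota 1 n.

Definition word_of_key : seq nat := chain_word key_chain n.

Lemma key_chain_uniq_size k : k <= n -> uniq (key_chain k) /\ size (key_chain k) = k.
Proof.
rewrite /key_chain; case: eqP => [-> // | /eqP k_neq0 le_kn].
case: ltnP => [lt_kn | ?]; last by rewrite iota_uniq size_iota; split=> //; lia.
have k_gt0 : 0 < k by rewrite lt0n.
have /andP[c_gt0 le_cc] : 0 < nth 0 lam k.-1 <= ncols lam by rewrite col_bounds ?k_gt0.
by rewrite uniq_colset // size_colset zeta_nth ?prednK ?size_lam //; lia.
Qed.

Lemma key_chain_subset k : k < n -> {subset key_chain k <= key_chain k.+1}.
Proof.
rewrite /key_chain /=; case: eqP => // /eqP k_neq0 lt_kn; rewrite lt_kn.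
have k_gt0 : 0 < k by rewrite lt0n.
have /andP[c_gt0 le_cc] : 0 < nth 0 lam k.-1 <= ncols lam by rewrite col_bounds ?k_gt0.
case: ltnP => [lt_k1n | _].
  have /andP[c1_gt0 _] : 0 < nth 0 lam k <= ncols lam.
    by apply: (col_bounds (k := k.+1)); rewrite lt_k1n.
  apply: colset_key_subset => //; apply/ltnW/ltn_nth_strict; rewrite ?size_lam //; lia.
by move=> x /(colset_range size_lam T_tableau c_gt0 le_cc); rewrite mem_iota; lia.
Qed.

Lemma colset_key_chain j : 0 < j -> j <= ncols lam -> colset T j =i key_chain (zeta lam j).
Proof.
(* Two columns of a key are nested, and the sizes agree. *)
move=> j_gt0 le_jc.
have zeta_gt0 := zeta_gt0 j_gt0 le_jc.
have le_zn : zeta lam j <= n by rewrite -size_lam zeta_leq_size.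
have [uniq_k size_k] := key_chain_uniq_size le_zn.
have size_eq : size (colset T j) = size (key_chain (zeta lam j)) by rewrite size_colset size_k.
suff [sub | sub] : {subset colset T j <= key_chain (zeta lam j)} \/
                   {subset key_chain (zeta lam j) <= colset T j}.
- by have [] := uniq_min_size (uniq_colset j_gt0 le_jc) sub (eq_leq (esym size_eq)).
- by have [_ eq_c] := uniq_min_size uniq_k sub (eq_leq size_eq) => x; rewrite eq_c.
rewrite /key_chain eqn0Ngt zeta_gt0 /=; case: ltnP => [lt_zn | _]; last first.
  by left=> x /(colset_range size_lam T_tableau j_gt0 le_jc); rewrite mem_iota; lia.
have /andP[c_gt0 le_cc] : 0 < nth 0 lam (zeta lam j).-1 <= ncols lam.
  by rewrite col_bounds ?zeta_gt0.
case: (leqP j (nth 0 lam (zeta lam j).-1)) => [le_jz | lt_zj].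
  by right; apply: colset_key_subset.
by left; apply: colset_key_subset => //; apply: ltnW.
Qed.

Lemma take_word_of_key k : k <= n -> take k word_of_key =i key_chain k.
Proof.
apply: take_chain_word; first by [].
- by move=> k' /key_chain_uniq_size[].
- by move=> k' /key_chain_uniq_size[].
exact: key_chain_subset.
Qed.

Lemma perm_word_of_key : perm_eq word_of_key (iota 1 n).
Proof.
have size_w : size word_of_key = n by exact: size_chain_word.
have eq_w : word_of_key =i iota 1 n.
  move=> x; rewrite -[word_of_key]take_size size_w take_word_of_key //.
  by rewrite /key_chain eqn0Ngt n_gt0 ltnn.
apply: (uniq_perm _ _ eq_w); rewrite ?iota_uniq //.
by rewrite (uniq_size_uniq (iota_uniq 1 n) (fun x => esym (eq_w x))) size_w size_iota.
Qed.

Lemma word_of_keyK : key_of_word n lam word_of_key = T.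
Proof.
apply/ffunP => -[a b]; apply: val_inj; rewrite ffunE /=.
case: ifP => [box_ab | /negbT out_ab]; last first.
  by rewrite inordK // (@tableau_out _ _ _ T_tableau (a, b) out_ab).
have /and4P[_ le_ac _ le_bz] := box_ab.
have -> : sort leq (take (zeta lam a.+1) word_of_key) = colset T a.+1.
  apply: (irr_sorted_eq ltn_trans ltnn).
  - by apply/sort_ltn_sorted/take_uniq; rewrite (perm_uniq perm_word_of_key) iota_uniq.
  - exact: colset_sorted.
  move=> x; rewrite mem_sort take_word_of_key ?colset_key_chain //.
  by rewrite -size_lam zeta_leq_size.
by rewrite nth_colset // ent_ord inordK.
Qed.

End WordOfKey.

Section KeyOfWordChain.

Variables (n : nat) (lam w : seq nat).
Hypotheses (n_gt0 : 0 < n) (size_lam : size lam = n) (lam_strict : sorted gtn lam).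
Hypothesis perm_w : perm_eq w (iota 1 n).

Lemma key_chain_key_of_word k : k <= n -> key_chain (key_of_word n lam w) k =i take k w.
Proof.
move=> le_kn x; rewrite /key_chain; case: eqP => [-> | /eqP k_neq0]; first by rewrite take0.
have k_gt0 : 0 < k by rewrite lt0n.
case: ltnP => [lt_kn | ?]; last first.
  by rewrite take_oversize ?(perm_size perm_w) ?size_iota ?(perm_mem perm_w) //; lia.
have le_c : nth 0 lam k.-1 <= ncols lam by rewrite nth_leq_ncols // size_lam; lia.
have c_gt0 : 0 < nth 0 lam k.-1 by rewrite nth_strict_gt0 // prednK // size_lam.
by rewrite colset_key_of_word // zeta_nth ?prednK ?mem_sort ?size_lam //; lia.
Qed.

Lemma key_of_wordK : word_of_key (key_of_word n lam w) = w.
Proof.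
have uniq_w : uniq w by rewrite (perm_uniq perm_w) iota_uniq.
have size_w : size w = n by rewrite (perm_size perm_w) size_iota.
apply: (@eq_from_nth _ 0); rewrite size_chain_word ?size_w // => i lt_in.
rewrite nth_chain_word //; apply/head_mem1/filter_new_letter; rewrite ?size_w //.
  exact: key_chain_key_of_word.
by apply: key_chain_key_of_word; apply: ltnW.
Qed.

End KeyOfWordChain.

Theorem corollary5p3 (n : nat) (lam : seq nat) :
  1 <= n -> size lam = n -> sorted (fun x y => y < x) lam ->
  #|[set T : filling n lam | is_key T && gapless T]| = catalan n.
Proof.
move=> n_gt0 size_lam lam_strict; set V := gapless_perms n 1 n.
have mem_V w : (w \in V) = perm_eq w (iota 1 n) && gapless_word w.
  exact: mem_gapless_perms.
have uniq_keys : uniq (map (key_of_word n lam) V).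
  rewrite map_inj_in_uniq ?uniq_gapless_perms // => w1 w2.
  rewrite !mem_V => /andP[perm_w1 _] /andP[perm_w2 _] eq_keys.
  by rewrite -(key_of_wordK n_gt0 size_lam lam_strict perm_w1) eq_keys key_of_wordK.
rewrite -ballot_catalan -(size_gapless_perms 1 (leqnn n)) -(size_map (key_of_word n lam)).
rewrite -(card_uniqP uniq_keys); apply: eq_card => T; rewrite inE.
apply/andP/mapP => [[T_key gap_T] | [w /[!mem_V] /andP[perm_w gap_w] ->]].
  have perm_w := perm_word_of_key n_gt0 size_lam lam_strict T_key.
  exists (word_of_key T); last by rewrite word_of_keyK.
  by rewrite mem_V perm_w -(gapless_key_of_word size_lam perm_w lam_strict) word_of_keyK.
by rewrite key_of_word_key ?gapless_key_of_word.
Qed.
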